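(* Let $\mathsf{X}$ be a finite connected graph with no tails and with $l$ ramified vertices, and suppose $\mathsf{X}$ has a segment decomposition into segments $\mathsf{S}^1,\dots,\mathsf{S}^k$, where $\mathsf{S}^1,\dots,\mathsf{S}^{k'}$ are the 2-segments and $\mathsf{S}^{k'+1},\dots,\mathsf{S}^k$ the 1-segments. Let $\mathsf{T}$ be a spanning tree of $\mathsf{X}$ and set $\mathsf{T}^i=\mathsf{T}\cap\mathsf{S}^i$. Then $\mathsf{T}^i$ is a spanning tree of the 2-segment $\mathsf{S}^i$ for exactly $l-1$ indices $i$.
   Context: Graphs are finite and undirected, possibly with multiple edges and loops. Some vertices are designated ramified; the others are unramified. A tail is an unramified vertex with exactly one neighbour joined to it by exactly one edge. For ramified $v,v'$, an admissible path from $v$ to $v'$ is a path whose intermediate vertices are all unramified (closed if $v=v'$). Segment decomposition: colour each admissible path between distinct ramified vertices so that paths sharing an edge receive the same colour; this must be possible with all paths of a colour joining the same pair of ramified vertices, and each colour class (union of its paths) is a 2-segment (contains exactly two ramified vertices). Every remaining edge lies on an admissible closed path at one ramified vertex through unramified vertices not in any 2-segment; colouring these closed paths likewise (paths sharing an edge get the same colour, no already coloured edge reused) gives the 1-segments (exactly one ramified vertex). The segments are pairwise edge-disjoint, share no unramified vertex, and cover $\mathsf{X}$; a segment with $t$ ramified vertices is a $t$-segment. *)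

(* Finite multigraphs with loops:
   vertices V, edges E, each edge has an (unordered) pair of endpoints ends e. *)
From mathcomp Require Import all_boot.
Set Implicit Arguments. Unset Strict Implicit. Unset Printing Implicit Defensive.

Section Graphs.
Variables (V E : finType) (ends : E -> V * V).

Definition joins (e : E) (x y : V) : bool :=
  (ends e == (x, y)) || (ends e == (y, x)).

Definition incident (e : E) (v : V) : bool :=
  ((ends e).1 == v) || ((ends e).2 == v).

(* a walk from x is a list of steps (edge, next vertex), using only edges of F *)
Fixpoint is_walk_in (F : {set E}) (x : V) (s : seq (E * V)) : bool :=
  if s is (e, y) :: s' then [&& e \in F, joins e x y & is_walk_in F y s'] else true.

Definition walk_end (x : V) (s : seq (E * V)) : V := last x (map snd s).

(* intermediate vertices x_1 .. x_{n-1} of the walk x_0 x_1 .. x_n *)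
Definition interior (s : seq (E * V)) : seq V := take (size s).-1 (map snd s).

Definition is_path_in (F : {set E}) (x y : V) (s : seq (E * V)) : bool :=
  [&& s != [::], is_walk_in F x s, walk_end x s == y,
      uniq (map snd s), uniq (map fst s) & x \notin interior s].

Definition connected_in (Vs : {set V}) (F : {set E}) : Prop :=
  forall x y, x \in Vs -> y \in Vs ->
    exists s, is_walk_in F x s && (walk_end x s == y).

(* no cycle (closed path, including loops and pairs of parallel edges) *)
Definition acyclic_in (F : {set E}) : Prop :=
  forall x s, ~~ is_path_in F x x s.

Definition is_spanning_tree (Vs : {set V}) (F : {set E}) : Prop :=
  [/\ (forall e, e \in F -> (ends e).1 \in Vs /\ (ends e).2 \in Vs),
      connected_in Vs F & acyclic_in F].

Definition graph_connected : Prop := connected_in setT setT.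

(* neighbours of v (v itself is a neighbour if there is a loop at v) *)
Definition neighbours (v : V) : {set V} := [set u | [exists e, joins e v u]].

Definition is_tail (R : {set V}) (v : V) : Prop :=
  v \notin R /\ exists u, neighbours v = [set u] /\ #|[set e | joins e v u]| = 1.

Definition admissible_path (R : {set V}) (r r' : V) (s : seq (E * V)) : Prop :=
  [/\ r \in R, r' \in R, is_path_in setT r r' s & all (fun v => v \notin R) (interior s)].

Definition seg_vertices (k : nat) (seg : E -> 'I_k) (i : 'I_k) : {set V} :=
  [set v | [exists e, (seg e == i) && incident e v]].

Definition in_no_2segment (k k' : nat) (seg : E -> 'I_k) (v : V) : bool :=
  [forall i : 'I_k, (i < k') ==> (v \notin seg_vertices seg i)].

(* Segment decomposition into k segments, given by the colouring seg of the
   edges; colours i < k' are the 2-segments, colours k' <= i < k the 1-segments. *)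
Definition segment_decomposition (R : {set V}) (k k' : nat) (seg : E -> 'I_k) : Prop :=
  [/\ k' <= k,
      (forall i : 'I_k, exists e, seg e == i),
      (forall i : 'I_k, #|seg_vertices seg i :&: R| = (if i < k' then 2 else 1)),
      ((forall r r' s, r != r' -> admissible_path R r r' s ->
          exists2 i : 'I_k, i < k' & all (fun p => seg p.1 == i) s) /\
       (forall e, seg e < k' ->
          exists r r' s, [/\ r != r', admissible_path R r r' s & e \in map fst s])) &
      [/\ (forall r s, admissible_path R r r s ->
             all (in_no_2segment k' seg) (interior s) ->
             exists2 i : 'I_k, k' <= i & all (fun p => seg p.1 == i) s),
          (forall e, k' <= seg e ->
             exists r s, [/\ admissible_path R r r s,
                             all (in_no_2segment k' seg) (interior s) & e \in map fst s]),
          (forall (i j : 'I_k) v, i != j -> v \in seg_vertices seg i ->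
             v \in seg_vertices seg j -> v \in R) &
          (* the segments cover all vertices (edges are covered since seg is total) *)
          (forall v, exists i, v \in seg_vertices seg i)]].

End Graphs.

(* Count the edges of the spanning tree T segment by segment.  Following a path of T from
   a vertex of a segment S^i towards a ramified vertex, every edge used before the first
   ramified vertex lies in S^i, since an unramified vertex belongs to a single segment; so
   each component of the forest T^i on S^i contains a ramified vertex of S^i.  Hence T^i has
   one component per ramified vertex of S^i, except that the two ramified vertices of a
   2-segment may be joined, which happens exactly when T^i spans S^i.  The forest formula
   #edges + #components = #vertices gives #T^i = #(S^i \ R) + [T^i spans S^i], and summing
   over the segments, which partition the edges and the unramified vertices,
   #V - 1 = #T = #V - #R + #{i | T^i spans S^i}. *)

From mathcomp Require Import all_boot zify.
Set Implicit Arguments. Unset Strict Implicit. Unset Printing Implicit Defensive.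

Section Forests.
Variables (V E : finType) (ends : E -> V * V).
Implicit Types (F G : {set E}) (x y : V) (s : seq (E * V)).

Definition adj F : rel V := fun x y => [exists e in F, joins ends e x y].
Local Notation conn F := (connect (adj F)).

Lemma joins_sym e x y : joins ends e x y = joins ends e y x.
Proof. by rewrite /joins orbC. Qed.

Lemma adj_sym F : symmetric (adj F).
Proof. by move=> x y; apply: eq_existsb => e; rewrite joins_sym. Qed.

Lemma conn_sym F : connect_sym (adj F).
Proof. exact/sym_connect_sym/adj_sym. Qed.

Lemma incident_joins e x y v :
  joins ends e x y -> incident ends e v = (v == x) || (v == y).
Proof.
by rewrite /joins /incident => /orP[]/eqP-> /=; rewrite ?(eq_sym x) ?(eq_sym y) // orbC.
Qed.

Lemma conn_sub F G : F \subset G -> subrel (conn F) (conn G).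
Proof.
move=> sFG; apply: connect_sub => x y /existsP[e /andP[eF exy]].
by apply/connect1/existsP; exists e; rewrite (subsetP sFG).
Qed.

Lemma walk_sub F G x s : F \subset G -> is_walk_in ends F x s -> is_walk_in ends G x s.
Proof.
move=> sFG; elim: s x => [|[e y] s IHs] x //= /and3P[eF -> /IHs->].
by rewrite (subsetP sFG).
Qed.

Lemma walk_edges_sub F x s : is_walk_in ends F x s -> {subset map fst s <= F}.
Proof.
elim: s x => [|[e y] s IHs] x //= /and3P[eF _ /IHs sF] d.
by rewrite inE => /predU1P[-> | /sF].
Qed.

Lemma walk_path F x s : is_walk_in ends F x s -> path (adj F) x (map snd s).
Proof.
elim: s x => [|[e y] s IHs] x //= /and3P[eF exy /IHs->].
by rewrite andbT; apply/existsP; exists e; rewrite eF.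
Qed.

Lemma path_walk F x p :
  path (adj F) x p -> exists2 s, is_walk_in ends F x s & map snd s = p.
Proof.
elim: p x => [|y p IHp] x /=; first by exists [::].
case/andP=> /existsP[e /andP[eF exy]] /IHp[s sW <-].
by exists ((e, y) :: s); rewrite //= eF exy.
Qed.

Lemma connP F x y :
  reflect (exists s, is_walk_in ends F x s && (walk_end x s == y)) (conn F x y).
Proof.
apply: (iffP connectP) => [[p /path_walk[s sW <-] ->] | [s /andP[sW /eqP <-]]].
  by exists s; rewrite sW /walk_end eqxx.
by exists (map snd s); first exact: walk_path.
Qed.

Lemma connected_inP (S : {set V}) F :
  connected_in ends S F <-> {in S &, forall x y, conn F x y}.
Proof. by split=> connS x y xS yS; apply/connP/connS. Qed.

Lemma acyclic_sub F G : F \subset G -> acyclic_in ends G -> acyclic_in ends F.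
Proof.
move=> sFG acG x s; apply: contra (acG x s).
by rewrite /is_path_in => /and5P[-> /(walk_sub sFG)-> -> -> ->].
Qed.

Lemma walk_edge_incident F x s e v : is_walk_in ends F x s ->
  e \in map fst s -> incident ends e v -> v \in x :: map snd s.
Proof.
elim: s x => [|[d y] s IHs] x //= /and3P[_ dxy sW].
rewrite inE => /predU1P[-> | /(IHs y sW)/[apply]]; last by rewrite !inE => ->; rewrite orbT.
by rewrite (incident_joins _ dxy) !inE => /orP[]->; rewrite ?orbT.
Qed.

Lemma uniq_walk_edges F x s :
  is_walk_in ends F x s -> uniq (x :: map snd s) -> uniq (map fst s).
Proof.
elim: s x => [|[e y] s IHs] x //= /and3P[_ exy sW] /andP[xNs Us].
rewrite (IHs y sW Us) andbT; apply: contra xNs => /(walk_edge_incident sW).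
by apply; rewrite (incident_joins _ exy) eqxx.
Qed.

Lemma interior_cons e y s : interior ((e, y) :: s) = belast y (map snd s).
Proof.
by rewrite /interior /= lastI -cats1 take_size_cat // size_belast size_map.
Qed.

Lemma acyclic_bridge F e x y : acyclic_in ends F -> e \in F ->
  joins ends e x y -> ~~ conn (F :\ e) x y.
Proof.
move=> acF eF exy; apply/negP; rewrite conn_sym => /connectP[p0 /shortenP[p pP Up _] xE].
have [s sW sp] := path_walk pP.
have sF : F :\ e \subset F := subD1set F e.
suff: is_path_in ends F x x ((e, y) :: s) by rewrite (negbTE (acF x _)).
have eNs : e \notin map fst s.
  by apply/negP => /(walk_edges_sub sW); rewrite setD11.
rewrite /is_path_in /= eF exy (walk_sub sF sW) eNs (uniq_walk_edges sW) sp ?Up //=.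
rewrite interior_cons /walk_end /= sp xE eqxx -[_ && uniq p]/(uniq (y :: p)) Up.
by move: Up; rewrite lastI rcons_uniq => /andP[].
Qed.

Lemma conn_isolated F v w :
  {in F, forall e, ~~ incident ends e v} -> conn F v w -> w = v.
Proof.
move=> isoV /connectP[[|u p] /=]; first by move=> _ ->.
case/andP=> /existsP[e /andP[eF evu]] _ _.
by move: (isoV e eF); rewrite (incident_joins _ evu) eqxx.
Qed.

Lemma n_comp_isolated F (A : {pred V}) :
  {in A, forall v, {in F, forall e, ~~ incident ends e v}} -> n_comp (adj F) A = #|A|.
Proof.
move=> isoA; apply: eq_card => v; rewrite !inE.
have [vA | _] := boolP (v \in A); last by rewrite andbF.
by rewrite andbT; apply/eqP/(conn_isolated (isoA v vA))/connect_root.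
Qed.

Lemma closed_adj_delete F e x y (a : {pred V}) : e \in F -> joins ends e x y ->
  closed (adj (F :\ e)) a -> (x \in a) = (y \in a) -> closed (adj F) a.
Proof.
move=> eF exy cla axy u w /existsP[d /andP[dF duw]].
have [de | dNe] := eqVneq d e; last first.
  by apply: cla; apply/existsP; exists d; rewrite !inE dNe dF.
by move: axy exy duw; rewrite de /joins => + /orP[]/eqP-> /orP[]/eqP[<- <-].
Qed.

Lemma conn_delete_closure F e x y : e \in F -> joins ends e x y ->
  conn F x =i closure (adj (F :\ e)) (pred2 x y).
Proof.
move=> eF exy v; have sF := subD1set F e.
apply/idP/idP => [xv | /pred0Pn[t /andP[/= vt /pred2P xyt]]].
  have clxy : closed (adj F) (closure (adj (F :\ e)) (pred2 x y)).
    apply: closed_adj_delete eF exy (closure_closed (conn_sym _) _) _.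
    by rewrite !mem_closure // !inE eqxx ?orbT.
  by rewrite -(closed_connect clxy xv) mem_closure // inE eqxx.
rewrite inE conn_sym; apply: connect_trans (conn_sub sF vt) _.
case: xyt => -> //; rewrite conn_sym.
by apply/connect1/existsP; exists e; rewrite eF exy.
Qed.

Lemma conn_delete_outside F e x y v : e \in F -> joins ends e x y ->
  ~~ conn F x v -> conn (F :\ e) v =1 conn F v.
Proof.
move=> eF exy xNv; have sF := subD1set F e.
have NvF' t : conn F x t -> ~~ conn (F :\ e) v t.
  move=> xt; apply: contra xNv => /(conn_sub sF) vt.
  by apply: connect_trans xt _; rewrite conn_sym.
have cxy : conn F x y by apply/connect1/existsP; exists e; rewrite eF exy.
have clv : closed (adj F) (conn (F :\ e) v).
  apply: closed_adj_delete eF exy (connect_closed (conn_sym _) v) _.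
  by rewrite !inE (negbTE (NvF' _ (connect0 _ x))) (negbTE (NvF' _ cxy)).
move=> w; apply/idP/idP => [/(conn_sub sF) // | vw].
by move: (closed_connect clv vw); rewrite !inE connect0.
Qed.

Lemma n_comp_delete_bridge F e x y : e \in F -> joins ends e x y ->
  ~~ conn (F :\ e) x y -> n_comp (adj (F :\ e)) V = (n_comp (adj F) V).+1.
Proof.
move=> eF exy nxy; rewrite !(n_compC (conn F x)) (n_comp_connect (conn_sym F)).
have -> : n_comp (adj (F :\ e)) (conn F x) = 2.
  rewrite (eq_n_comp_r (conn_delete_closure eF exy)) n_comp_closure2 ?nxy //.
  exact: conn_sym.
suff -> : n_comp (adj (F :\ e)) (predC (conn F x)) = n_comp (adj F) (predC (conn F x)).
  by rewrite addSn.
apply: eq_card => v; rewrite !inE.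
have [_ | xNv] := boolP (conn F x v); first by rewrite !andbF.
by rewrite !andbT /roots /root (eq_pick (conn_delete_outside eF exy xNv)).
Qed.

Lemma forest_card F : acyclic_in ends F -> #|F| + n_comp (adj F) V = #|V|.
Proof.
elim: {F}_.+1 {-2}F (ltnSn #|F|) => // n IHn F ltFn acF.
have [-> | [e eF]] := set_0Vmem F.
  by rewrite cards0 n_comp_isolated // => v _ e; rewrite inE.
set x := (ends e).1; set y := (ends e).2.
have exy : joins ends e x y by rewrite /joins -surjective_pairing eqxx.
have acF' : acyclic_in ends (F :\ e) := acyclic_sub (subD1set F e) acF.
rewrite (cardsD1 e F) eF in ltFn *.
have := IHn (F :\ e) ltFn acF'.
by rewrite (n_comp_delete_bridge eF exy (acyclic_bridge acF eF exy)); lia.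
Qed.

Lemma forest_card_in F (S : {set V}) : acyclic_in ends F ->
  (forall e v, e \in F -> incident ends e v -> v \in S) ->
  #|F| + n_comp (adj F) S = #|S|.
Proof.
move=> acF FS; have := forest_card acF.
rewrite [n_comp _ V](n_compC S) [n_comp _ [predC S]]n_comp_isolated => [|v vNS e eF].
  by rewrite -(cardC S) addnA => /addIn.
exact: contra (FS e v eF) vNS.
Qed.

Lemma n_comp_connected F x : connected_in ends setT F -> n_comp (adj F) V = 1.
Proof.
move=> /connected_inP connF; rewrite -(n_comp_connect (conn_sym F) x).
by apply: eq_n_comp_r => y; rewrite !inE connF ?inE.
Qed.

End Forests.

Lemma sum_card_partition (I T : finType) (A : {set T}) (B : I -> {set T}) :
  {in A, forall x, #|[set i | x \in B i]| = 1} -> \sum_i #|A :&: B i| = #|A|.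
Proof.
move=> B1; have cardAB i : #|A :&: B i| = \sum_(x in A) (x \in B i).
  rewrite -sum1_card (eq_bigl _ _ (fun x => in_setI x A (B i))) big_mkcondr.
  by apply: eq_big.
under eq_bigr do rewrite cardAB.
rewrite exchange_big -sum1_card.
apply: eq_big => // x xA.
rewrite -(B1 x xA) -sum1dep_card [RHS]big_mkcond.
by apply: eq_bigr => i _; case: (x \in B i).
Qed.

Section Segments.
Variables (V E : finType) (ends : E -> V * V) (R : {set V}) (k k' : nat) (seg : E -> 'I_k).
Local Notation Sv := (seg_vertices ends seg).
Local Notation conn F := (connect (adj ends F)).
Local Notation seg_edges F i := (F :&: [set e | seg e == i]).

Hypothesis seg_card : forall i : 'I_k, #|Sv i :&: R| = (if i < k' then 2 else 1).
Hypothesis seg_unramified : forall (i j : 'I_k) v,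
  i != j -> v \in Sv i -> v \in Sv j -> v \in R.
Hypothesis seg_cover : forall v, exists i, v \in Sv i.

Lemma incident_seg e v : incident ends e v -> v \in Sv (seg e).
Proof. by move=> ev; rewrite inE; apply/existsP; exists e; rewrite eqxx. Qed.

Lemma seg_edges_incident F i e v : e \in seg_edges F i -> incident ends e v -> v \in Sv i.
Proof. by case/setIP=> _; rewrite inE => /eqP <-; apply: incident_seg. Qed.

Lemma card_segments_unramified v : v \notin R -> #|[set i | v \in Sv i]| = 1.
Proof.
move=> vNR; apply/eqP/cards1P; have [i vi] := seg_cover v; exists i.
apply/setP => j; rewrite in_set in_set1; apply/idP/eqP => [vj | -> //].
by apply/eqP; apply: contraNT vNR => /seg_unramified/(_ vj vi).
Qed.

Lemma walk_to_ramified F i u s : u \in Sv i -> is_walk_in ends F u s ->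
  walk_end u s \in R -> exists2 r, r \in Sv i :&: R & conn (seg_edges F i) u r.
Proof.
elim: s u => [|[e z] s IHs] u ui /=; first by move=> _ uR; exists u; rewrite // in_setI ui.
case/and3P=> eF euz sW zR.
have [uR | uNR] := boolP (u \in R); first by exists u; rewrite // in_setI ui.
have ue : u \in Sv (seg e) by apply: incident_seg; rewrite (incident_joins _ euz) eqxx.
have eFi : e \in seg_edges F i.
  by rewrite !inE eF; apply: contraNT uNR => /seg_unramified/(_ ue ui).
have zi : z \in Sv i.
  by apply: seg_edges_incident eFi _; rewrite (incident_joins _ euz) eqxx orbT.
have [r ri zr] := IHs z zi sW zR.
by exists r => //; apply: connect_trans zr; apply/connect1/existsP; exists e; rewrite eFi.
Qed.

Lemma ramified_pair i : exists r1 r2, Sv i :&: R = [set r1; r2] /\ (i < k') = (r1 != r2).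
Proof.
move: (seg_card i); case: ifP => ik /eqP.
  by case/cards2P => r1 [r2 [r12 ->]]; exists r1, r2.
by case/cards1P => r ->; exists r, r; rewrite setUid eqxx.
Qed.

Variable T : {set E}.
Hypothesis T_connected : connected_in ends setT T.
Hypothesis T_acyclic : acyclic_in ends T.
Local Notation Ti i := (seg_edges T i).

Lemma segment_closure i : Sv i =i closure (adj ends (Ti i)) (Sv i :&: R).
Proof.
have [r1 [r2 [Ri _]]] := ramified_pair i.
have /setIP[_ r1R] : r1 \in Sv i :&: R by rewrite Ri !inE eqxx.
move=> v; apply/idP/idP => [vi | /pred0Pn[r /andP[/= vr /setIP[ri _]]]].
  have [s /andP[sW /eqP send]] := T_connected (in_setT v) (in_setT r1).
  have /(walk_to_ramified vi sW)[r ri vr] : walk_end v s \in R by rewrite send.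
  by apply/pred0Pn; exists r; rewrite /= ri andbT.
apply: contraT => vNi.
have vNTi : {in Ti i, forall e, ~~ incident ends e v}.
  by move=> e eTi; apply: contra (seg_edges_incident eTi) vNi.
by move: ri; rewrite (conn_isolated vNTi vr) (negbTE vNi).
Qed.

Lemma n_comp_segment i r1 r2 : Sv i :&: R = [set r1; r2] ->
  n_comp (adj ends (Ti i)) (Sv i) = (~~ conn (Ti i) r1 r2).+1.
Proof.
move=> Ri; rewrite -n_comp_closure2; last exact: conn_sym.
apply: eq_n_comp_r => v; rewrite segment_closure Ri.
by congr (~~ _); apply: eq_disjoint_r => u; rewrite !inE.
Qed.

Lemma segment_spanning_treeP i r1 r2 : Sv i :&: R = [set r1; r2] ->
  is_spanning_tree ends (Sv i) (Ti i) <-> conn (Ti i) r1 r2.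
Proof.
move=> Ri; have /setIP[r1i _] : r1 \in Sv i :&: R by rewrite Ri !inE eqxx.
have /setIP[r2i _] : r2 \in Sv i :&: R by rewrite Ri !inE eqxx orbT.
split=> [[_ /connected_inP connTi _] | r12]; first exact: connTi.
split; last exact: acyclic_sub (subsetIl _ _) T_acyclic.
  by move=> e eTi; split; apply: seg_edges_incident eTi _; rewrite /incident eqxx ?orbT.
have conn_r1 v : v \in Sv i -> conn (Ti i) v r1.
  rewrite segment_closure Ri => /pred0Pn[r /andP[/= vr]].
  rewrite !inE => /orP[]/eqP rE; rewrite rE in vr => //.
  by apply: connect_trans vr _; rewrite conn_sym.
apply/connected_inP => x y xi yi.
by apply: connect_trans (conn_r1 x xi) _; rewrite conn_sym; apply: conn_r1.
Qed.

Definition spanned_segments :=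
  [set i : 'I_k | (i < k') && (n_comp (adj ends (Ti i)) (Sv i) == 1)].

Lemma mem_spanned_segments i :
  i \in spanned_segments <-> i < k' /\ is_spanning_tree ends (Sv i) (Ti i).
Proof.
have [r1 [r2 [Ri _]]] := ramified_pair i.
rewrite inE (n_comp_segment Ri) eqSS (segment_spanning_treeP Ri).
by case: (conn _ r1 r2); rewrite /= ?andbT ?andbF; split=> [|[]].
Qed.

Lemma card_segment_tree i : #|Ti i| = #|Sv i :\: R| + (i \in spanned_segments).
Proof.
have [r1 [r2 [Ri ik]]] := ramified_pair i.
have := forest_card_in (acyclic_sub (subsetIl _ _) T_acyclic) (@seg_edges_incident T i).
rewrite inE (n_comp_segment Ri) ik -(cardsID R (Sv i)) Ri cards2 {Ri ik}.
case: (eqVneq r1 r2) => [<- | _]; first by rewrite connect0 eqxx /=; lia.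
by case: (conn (Ti i) r1 r2) => /=; lia.
Qed.

Lemma card_tree_segments : #|T| = #|~: R| + #|spanned_segments|.
Proof.
have cardT : #|T| = \sum_i #|Ti i|.
  rewrite sum_card_partition // => e _.
  by rewrite -(cards1 (seg e)); apply: eq_card => i; rewrite !inE eq_sym.
have cardNR : #|~: R| = \sum_i #|Sv i :\: R|.
  under eq_bigr do rewrite setDE setIC.
  by rewrite sum_card_partition // => v; rewrite inE; apply: card_segments_unramified.
rewrite cardT cardNR -sum1_card; under eq_bigr do rewrite card_segment_tree.
rewrite big_split /=; congr (_ + _).
by rewrite [RHS]big_mkcond; apply: eq_bigr => i _; case: (i \in _).
Qed.

Lemma card_spanned_segments : #|spanned_segments| = #|R| - 1.
Proof.
have := forest_card T_acyclic; rewrite card_tree_segments -(cardsC R).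
have [-> | [r _]] := set_0Vmem R; last by rewrite (n_comp_connected r T_connected); lia.
by rewrite cards0; lia.
Qed.

End Segments.

Theorem lemma5p10 (V E : finType) (ends : E -> V * V) (R : {set V})
    (k k' : nat) (seg : E -> 'I_k) (T : {set E}) :
  graph_connected ends ->
  (forall v, ~ is_tail ends R v) ->
  segment_decomposition ends R k' seg ->
  is_spanning_tree ends setT T ->
  exists I : {set 'I_k},
    (forall i : 'I_k, i \in I <->
       (i < k' /\ is_spanning_tree ends (seg_vertices ends seg i)
                                        (T :&: [set e | seg e == i]))) /\
    #|I| = #|R| - 1.
Proof.
move=> _ _ [_ _ seg_card _ [_ _ seg_unramified seg_cover]] [_ T_connected T_acyclic].
exists (spanned_segments ends k' seg T); split.
  by move=> i; apply: mem_spanned_segments.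
exact: card_spanned_segments.
Qed.
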